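(* Let $\alpha\ge 0$, let $\mathbf{G}\subset\mathbb{R}^2$ be a ground-truth box (a closed oriented rectangle of positive area not containing the origin) and let $\mathbf{P}\subset\mathbb{R}^2$ be an arbitrary prediction box (a closed oriented rectangle). Then $0 \le \mathsf{EC\text{-}IoU}(\mathbf{P},\mathbf{G}) \le 1$.
   Context: $\rho(x,y)=\sqrt{x^2+y^2}$ is the distance to the origin (the ego position). For a ground-truth box $\mathbf{G}$ with center $(x_{\mathbf{G}},y_{\mathbf{G}})$, define the weight $\omega_{\mathbf{G}}(x,y) = \left[\rho(x_{\mathbf{G}},y_{\mathbf{G}})/\rho(x,y)\right]^{\alpha}$ for $(x,y)\in\mathbf{G}$. For a region $\mathbf{D}\subseteq\mathbf{G}$ let $\mathsf{Weighted\text{-}Area}_{\mathbf{G}}(\mathbf{D}) = \iint_{\mathbf{D}} \omega_{\mathbf{G}}(x,y)\,dA$, and for any region $\mathbf{D}$ let $\mathsf{Area}(\mathbf{D}) = \iint_{\mathbf{D}} 1\,dA$. The Ego-Centric IoU is $$\mathsf{EC\text{-}IoU}(\mathbf{P},\mathbf{G}) = \frac{\mathsf{Weighted\text{-}Area}_{\mathbf{G}}(\mathbf{P}\cap\mathbf{G})}{\mathsf{Weighted\text{-}Area}_{\mathbf{G}}(\mathbf{G}) + \mathsf{Area}(\mathbf{P}) - \mathsf{Area}(\mathbf{P}\cap\mathbf{G})}.$$ *)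

From HB Require Import structures.
From mathcomp Require Import all_boot all_order all_algebra.
From mathcomp Require Import all_classical all_reals all_analysis.
Set Implicit Arguments. Unset Strict Implicit. Unset Printing Implicit Defensive.
Import Order.TTheory GRing.Theory Num.Theory.
Local Open Scope classical_set_scope.
Local Open Scope ring_scope.

Section ECIoU.
Variable R : realType.

Definition leb2 := (@lebesgue_measure R \x @lebesgue_measure R)%E.

Definition rho (p : R * R) : R := Num.sqrt (p.1 ^+ 2 + p.2 ^+ 2).

(* closed oriented rectangle with center (cx,cy), length l, width w
   (side lengths along the rotated axes) and heading angle th *)
Definition obox (cx cy l w th : R) : set (R * R) :=
  [set p | `|(p.1 - cx) * cos th + (p.2 - cy) * sin th| <= l / 2 /\
           `| - (p.1 - cx) * sin th + (p.2 - cy) * cos th| <= w / 2].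

Definition ec_weight (alpha cx cy : R) (p : R * R) : R :=
  powR (rho (cx, cy) / rho p) alpha.

Definition weighted_area (alpha cx cy : R) (D : set (R * R)) : R :=
  Rintegral leb2 D (ec_weight alpha cx cy).

Definition area (D : set (R * R)) : R := fine (leb2 D).

(* EC-IoU(P, G) where G has center (cx,cy) *)
Definition ec_iou (alpha cx cy : R) (P G : set (R * R)) : R :=
  weighted_area alpha cx cy (P `&` G) /
  (weighted_area alpha cx cy G + area P - area (P `&` G)).

End ECIoU.

From HB Require Import structures.
From mathcomp Require Import all_boot all_order all_algebra.
From mathcomp Require Import all_classical all_reals all_analysis.
From mathcomp Require Import ring lra.
Import Order.TTheory GRing.Theory Num.Theory measurable_realfun.
Local Open Scope classical_set_scope.
Local Open Scope ring_scope.

(* The numerator is a weighted area of P `&` G, hence at most the weighted area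
   of G because the weight is nonnegative, and Area(P `&` G) <= Area(P); so the
   denominator dominates the numerator.  The analytic content is that every
   quantity involved is finite (Rintegral and fine silently return 0 otherwise):
   boxes are bounded, hence of finite Lebesgue measure, and a box avoiding the
   origin stays at a positive distance d from it, so the weight is bounded by
   (rho(x_G, y_G) / d)^alpha on G and is integrable there. *)

Lemma iou_ratio_ge0_le1 (R : realFieldType) (I J a c : R) :
  0 <= I <= J -> 0 <= c <= a -> 0 <= I / (J + a - c) <= 1.
Proof.
move=> /andP[I0 IJ] /andP[c0 ca].
have den0 : 0 <= J + a - c by lra.
rewrite divr_ge0 //=.
have [->|den_neq0] := eqVneq (J + a - c) 0; first by rewrite invr0 mulr0.
have den_gt0 : 0 < J + a - c by rewrite lt_neqAle eq_sym den_neq0.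
by rewrite ler_pdivrMr // mul1r; lra.
Qed.

Section measure_integral_monotone.
Context d (T : measurableType d) (R : realType).
Variable mu : {measure set T -> \bar R}.

Lemma fine_le_measure (A B : set T) : measurable A -> measurable B ->
  A `<=` B -> (mu B < +oo)%E -> fine (mu A) <= fine (mu B).
Proof.
move=> mA mB AB muB; have muAB : (mu A <= mu B)%E by apply: le_measure; rewrite ?inE.
by apply: fine_le => //; rewrite ge0_fin_numE // (le_lt_trans muAB).
Qed.

Lemma ge0_le_Rintegral_subset (A B : set T) (f : T -> R) :
  measurable A -> measurable B -> A `<=` B ->
  mu.-integrable B (EFin \o f) -> (forall x, B x -> 0 <= f x) ->
  \int[mu]_(x in A) f x <= \int[mu]_(x in B) f x.
Proof.
move=> mA mB AB intf f0; apply: fine_le.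
- exact/integrable_fin_num/(integrableS mB mA AB).
- exact: integrable_fin_num.
case/integrableP: intf => mf _.
apply: (ge0_subset_integral mu mA mB mf _ AB) => x /f0.
by rewrite lee_fin.
Qed.

End measure_integral_monotone.

Lemma measurable_inv (R : realType) : measurable_fun [set: R] (@GRing.inv R).
Proof.
have -> : [set: R] = [set x | x != 0] `|` [set 0].
  by apply/seteqP; split => x //= _; case: (eqVneq x 0); [right|left].
have mneq0 := open_measurable (@open_neq R 0).
apply/(measurable_funU _ mneq0 (measurable_set1 0)); split.
- apply: open_continuous_measurable_fun; first exact: open_neq.
  by move=> x; rewrite inE => /inv_continuous.
- exact: measurable_fun_set1.
Qed.

Lemma normr_comb_le {R : numDomainType} (u v a b : R) :
  `|a| <= 1 -> `|b| <= 1 -> `|u * a + v * b| <= `|u| + `|v|.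
Proof.
move=> a1 b1; apply: le_trans (ler_normD _ _) _; rewrite !normrM.
by apply: lerD; rewrite -[X in _ <= X]mulr1; apply: ler_wpM2l.
Qed.

Section ego_centric_box.
Context {R : realType}.
Implicit Types (cx cy l w th : R) (p : R * R).

Lemma measurable_obox cx cy l w th : measurable (obox cx cy l w th).
Proof.
pose coord (a b : R) p := `|(p.1 - cx) * a + (p.2 - cy) * b|.
have mcoord a b : measurable_fun [set: R * R] (coord a b).
  apply: measurableT_comp; first exact: normr_measurable.
  apply: measurable_funD; apply: measurable_funM => //.
  - by apply: measurable_funB => //; exact: measurable_fst.
  - by apply: measurable_funB => //; exact: measurable_snd.
have -> : obox cx cy l w th = coord (cos th) (sin th) @^-1` `]-oo, l / 2] `&`
                              coord (- sin th) (cos th) @^-1` `]-oo, w / 2].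
  by apply/seteqP; split => p; rewrite /obox /coord /= !in_itv /= mulrN mulNr.
by apply: measurableI; rewrite -[X in measurable X]setTI;
  apply: mcoord => //; exact: measurable_itv.
Qed.

Lemma measurable_rho : measurable_fun [set: R * R] (@rho R).
Proof.
apply: (measurableT_comp (f := @Num.sqrt R)).
  exact: continuous_measurable_fun (@sqrt_continuous R).
by apply: measurable_funD; apply: measurable_funX;
  [exact: measurable_fst|exact: measurable_snd].
Qed.

Lemma measurable_ec_weight alpha cx cy :
  measurable_fun [set: R * R] (ec_weight alpha cx cy).
Proof.
apply: (measurableT_comp (f := @powR R ^~ alpha)); first exact: measurable_powR.
apply: measurable_funM => //.
apply: (measurableT_comp (f := @GRing.inv R)); [exact: measurable_inv|exact: measurable_rho].
Qed.

Lemma normr_dot_unit_le_rho (a b : R) p : a ^+ 2 + b ^+ 2 = 1 ->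
  `|p.1 * a + p.2 * b| <= rho p.
Proof.
move=> ab1; rewrite -sqrtr_sqr /rho; apply: ler_wsqrtr.
have -> : p.1 ^+ 2 + p.2 ^+ 2 = (p.1 * a + p.2 * b) ^+ 2 + (p.2 * a - p.1 * b) ^+ 2.
  by rewrite -[LHS]mulr1 -ab1; ring.
by rewrite lerDl sqr_ge0.
Qed.

Lemma rho_ge_slab_gap (a b cx cy r : R) p : a ^+ 2 + b ^+ 2 = 1 ->
  `|(p.1 - cx) * a + (p.2 - cy) * b| <= r -> `|cx * a + cy * b| - r <= rho p.
Proof.
move=> ab1 slab; have := normr_dot_unit_le_rho a b p ab1.
have -> : cx * a + cy * b = (p.1 * a + p.2 * b) - ((p.1 - cx) * a + (p.2 - cy) * b).
  by ring.
have := ler_normB (p.1 * a + p.2 * b) ((p.1 - cx) * a + (p.2 - cy) * b).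
lra.
Qed.

Lemma obox_rho_lbound cx cy l w th : ~ obox cx cy l w th (0, 0) ->
  exists2 d : R, 0 < d & forall p, obox cx cy l w th p -> d <= rho p.
Proof.
(* The box is the intersection of two slabs; the origin lies outside one of
   them, and its gap to that slab bounds rho from below on the box. *)
have unit_u : cos th ^+ 2 + sin th ^+ 2 = 1 := cos2Dsin2 th.
have unit_v : (- sin th) ^+ 2 + cos th ^+ 2 = 1 by rewrite sqrrN addrC.
have -> : obox cx cy l w th =
    [set p | `|(p.1 - cx) * cos th + (p.2 - cy) * sin th| <= l / 2 /\
             `|(p.1 - cx) * - sin th + (p.2 - cy) * cos th| <= w / 2].
  by apply/seteqP; split => p; rewrite /obox /= mulrN mulNr.
rewrite /= !sub0r !mulNr -!opprD !normrN => out0.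
have [u_out|u_in] := ltP (l / 2) `|cx * cos th + cy * sin th|.
- exists (`|cx * cos th + cy * sin th| - l / 2); first by rewrite subr_gt0.
  by move=> p [pu _]; exact: rho_ge_slab_gap unit_u pu.
- have v_out : w / 2 < `|cx * - sin th + cy * cos th|.
    by rewrite ltNge; apply/negP => v_in; exact: out0.
  exists (`|cx * - sin th + cy * cos th| - w / 2); first by rewrite subr_gt0.
  by move=> p [_ pv]; exact: rho_ge_slab_gap unit_v pv.
Qed.

Lemma obox_sub_square cx cy l w th : obox cx cy l w th `<=`
  `[cx - (l / 2 + w / 2), cx + (l / 2 + w / 2)] `*`
  `[cy - (l / 2 + w / 2), cy + (l / 2 + w / 2)].
Proof.
move=> p [pu pv].
set u := (p.1 - cx) * cos th + (p.2 - cy) * sin th in pu.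
set v := - (p.1 - cx) * sin th + (p.2 - cy) * cos th in pv.
have e1 : p.1 - cx = u * cos th + v * - sin th.
  by rewrite -[LHS]mulr1 -(cos2Dsin2 th) /u /v; ring.
have e2 : p.2 - cy = u * sin th + v * cos th.
  by rewrite -[LHS]mulr1 -(cos2Dsin2 th) /u /v; ring.
have [c1 s1] := (cos_max th, sin_max th).
have ns1 : `|- sin th| <= 1 by rewrite normrN.
split => /=; rewrite in_itv /= -ler_distl.
- by rewrite e1; have := normr_comb_le u v _ _ c1 ns1; lra.
- by rewrite e2; have := normr_comb_le u v _ _ s1 c1; lra.
Qed.

Lemma obox_measure_lty cx cy l w th : (leb2 (obox cx cy l w th) < +oo)%E.
Proof.
have segment_lty (a b : R) : (lebesgue_measure `[a, b] < +oo)%E.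
  exact/compact_finite_measure/segment_compact.
set M := l / 2 + w / 2.
have le_square : (leb2 (obox cx cy l w th) <=
    leb2 (`[(cx - M)%R, (cx + M)%R] `*` `[(cy - M)%R, (cy + M)%R]))%E.
  apply: le_measure; rewrite ?inE; last exact: obox_sub_square.
  - exact: measurable_obox.
  - by apply: measurableX; exact: measurable_itv.
apply: le_lt_trans le_square _.
rewrite /leb2 product_measure1E; try exact: measurable_itv.
apply: lte_mul_pinfty => //.
- by rewrite fin_numElt segment_lty andbT (lt_le_trans ltNy0).
- exact: segment_lty.
Qed.

Lemma ec_weight_ge0 alpha cx cy p : 0 <= ec_weight alpha cx cy p.
Proof. exact: powR_ge0. Qed.

Lemma ec_weight_le alpha cx cy d p : 0 <= alpha -> 0 < d -> d <= rho p ->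
  ec_weight alpha cx cy p <= powR (rho (cx, cy) / d) alpha.
Proof.
move=> alpha0 d0 dp; have rho_gt0 : 0 < rho p := lt_le_trans d0 dp.
apply: ge0_ler_powR => //; rewrite ?nnegrE.
- by apply: divr_ge0; exact: sqrtr_ge0.
- by apply: divr_ge0; [exact: sqrtr_ge0|exact: ltW].
by apply: ler_wpM2l; [exact: sqrtr_ge0|rewrite lef_pV2 ?posrE].
Qed.

Lemma integrable_ec_weight_obox alpha cx cy gx gy l w th : 0 <= alpha ->
  ~ obox gx gy l w th (0, 0) ->
  (@leb2 R).-integrable (obox gx gy l w th) (EFin \o ec_weight alpha cx cy).
Proof.
move=> alpha0 /obox_rho_lbound[d d0 far].
apply: measurable_bounded_integrable.
- exact: measurable_obox.
- exact: obox_measure_lty.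
- exact: measurable_funTS (measurable_ec_weight _ _ _).
exists (powR (rho (cx, cy) / d) alpha); split; first by rewrite num_real.
move=> M KM p /far dp /=; rewrite ger0_norm ?ec_weight_ge0 //.
by apply/ltW/(le_lt_trans _ KM); exact: ec_weight_le.
Qed.

End ego_centric_box.

Theorem lemma2 (R : realType) (alpha : R)
  (gx gy gl gw gth : R) (px py pl pw pth : R) :
  0 <= alpha ->
  0 < gl -> 0 < gw ->
  ~ obox gx gy gl gw gth (0, 0) ->
  0 <= pl -> 0 <= pw ->
  0 <= ec_iou alpha gx gy (obox px py pl pw pth) (obox gx gy gl gw gth) <= 1.
Proof.
move=> alpha0 _ _ out0 _ _.
set P := obox px py pl pw pth; set G := obox gx gy gl gw gth.
have mP : measurable P by exact: measurable_obox.
have mG : measurable G by exact: measurable_obox.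
have mPG : measurable (P `&` G) := measurableI _ _ mP mG.
apply: iou_ratio_ge0_le1; apply/andP; split.
- by apply: Rintegral_ge0 => p _; exact: ec_weight_ge0.
- apply: ge0_le_Rintegral_subset => //.
  + exact: (integrable_ec_weight_obox _ gx gy _ _ _ _ _ alpha0 out0).
  + by move=> p _; exact: ec_weight_ge0.
- exact/fine_ge0/measure_ge0.
- apply: fine_le_measure => //; exact: obox_measure_lty.
Qed.
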